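(* For every extended directed co-graph $G$, $\mathrm{dpw}(G)=\mathrm{dtw}(G)$.
   Context: Digraphs are finite, without loops or multiple arcs. For vertex-disjoint digraphs $G_1,\ldots,G_k$: the series composition $G_1\otimes\cdots\otimes G_k$ is their disjoint union plus all arcs in both directions between vertices of $G_i$ and $G_j$ for all $i\ne j$; a directed union $G_1\ominus\cdots\ominus G_k$ is any digraph obtained from their disjoint union by adding some (possibly none or all) arcs from vertices of $G_i$ to vertices of $G_j$ with $i<j$. Extended directed co-graphs: every single-vertex digraph is one, and if $G_1,\ldots,G_k$ are vertex-disjoint extended directed co-graphs then every directed union of them and their series composition are extended directed co-graphs. Directed path-width: a directed path-decomposition of $G=(V,E)$ is a sequence $(X_1,\ldots,X_r)$ of subsets of $V$ with $\bigcup X_i=V$, for each arc $(u,v)$ some $i\le j$ with $u\in X_i,v\in X_j$, and for each vertex the bags containing it having consecutive indices; width $\max|X_i|-1$; $\mathrm{dpw}(G)$ is the minimum width. Directed tree-width: for $Z\subseteq V$, $S\subseteq V$ is $Z$-normal if no directed walk in $G-Z$ with first and last vertex in $S$ uses a vertex of $G-(Z\cup S)$. A directed tree-decomposition is $(T,\mathcal{X},\mathcal{W})$ with $T=(V_T,E_T)$ an out-tree (rooted, arcs directed away from root; $u\le v$ means a directed path of $\ge0$ arcs from $u$ to $v$), $\mathcal{X}=\{X_e:e\in E_T\}$, $\mathcal{W}=\{W_r:r\in V_T\}$ subsets of $V$, such that $\mathcal{W}$ partitions $V$ into nonempty sets and for each $(u,v)\in E_T$ the set $\bigcup\{W_r: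 v\le r\}$ is $X_{(u,v)}$-normal; width $\max_r|W_r\cup\bigcup_{e\sim r}X_e|-1$ ($e\sim r$: $r$ is an end of $e$); $\mathrm{dtw}(G)$ is the minimum width. *)

From mathcomp Require Import all_boot.
From Stdlib Require Import ClassicalEpsilon.

Set Implicit Arguments.
Unset Strict Implicit.
Unset Printing Implicit Defensive.

(* A digraph is given by a vertex set V : {set T} and an arc set
   E : {set T * T} inside an ambient finite type T. *)

Section Digraphs.
Variable T : finType.

Definition induced (E : {set T * T}) (A : {set T}) : {set T * T} :=
  [set e in E | (e.1 \in A) && (e.2 \in A)].

Definition ordered_parts (P : seq {set T}) (V : {set T}) : Prop :=
  [/\ 0 < size P,
      (forall i j, i < j -> j < size P ->
         [disjoint nth set0 P i & nth set0 P j]) &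
      \bigcup_(A <- P) A = V].

(* The parts G_i are the induced subdigraphs
   on the blocks of P; "series" adds all arcs in both directions between
   different blocks, "directed union" only allows arcs from a block with
   smaller index to a block with larger index (any such set of arcs). *)
Inductive ext_dcograph : {set T} -> {set T * T} -> Prop :=
| edc_single (v : T) : ext_dcograph [set v] set0
| edc_series (V : {set T}) (E : {set T * T}) (P : seq {set T}) :
    ordered_parts P V ->
    E \subset setX V V ->
    (forall A, A \in P -> ext_dcograph A (induced E A)) ->
    (forall i j u v, i < size P -> j < size P -> i != j ->
       u \in nth set0 P i -> v \in nth set0 P j -> (u, v) \in E) ->
    ext_dcograph V E
| edc_dunion (V : {set T}) (E : {set T * T}) (P : seq {set T}) :
    ordered_parts P V ->
    E \subset setX V V ->
    (forall A, A \in P -> ext_dcograph A (induced E A)) ->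
    (forall i j u v, i < size P -> j < size P ->
       u \in nth set0 P i -> v \in nth set0 P j -> (u, v) \in E -> i <= j) ->
    ext_dcograph V E.

Definition is_dpath_decomp (V : {set T}) (E : {set T * T}) (X : seq {set T})
  : Prop :=
  [/\ (forall B, B \in X -> B \subset V),
      \bigcup_(B <- X) B = V,
      (forall u v, (u, v) \in E ->
         exists i j, [/\ i <= j, j < size X,
                         u \in nth set0 X i & v \in nth set0 X j]) &
      (forall x i j k, i <= j -> j <= k -> k < size X ->
         x \in nth set0 X i -> x \in nth set0 X k -> x \in nth set0 X j)].

Definition dpath_width (X : seq {set T}) : nat := (\max_(B <- X) #|B|) - 1.

Definition out_tree (I : finType) (ET : rel I) : Prop :=
  exists r : I,
    [/\ (forall u, ~~ ET u r),
        (forall v, v != r -> exists! u, ET u v) &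
        (forall v, connect ET r v)].

Definition dwalk (E : {set T * T}) (x : T) (p : seq T) : bool :=
  path (fun a b => (a, b) \in E) x p.

Definition normal (V : {set T}) (E : {set T * T}) (Z S : {set T}) : Prop :=
  forall x p, dwalk E x p ->
    all (fun y => y \in V :\: Z) (x :: p) ->
    x \in S -> last x p \in S ->
    all (fun y => y \in S :|: Z) (x :: p).

Definition is_dtree_decomp (V : {set T}) (E : {set T * T})
  (I : finType) (ET : rel I) (X : I -> I -> {set T}) (W : I -> {set T})
  : Prop :=
  [/\ out_tree ET,
      (forall u v, ET u v -> X u v \subset V),
      [/\ (forall r, W r != set0),
           (forall r s, r != s -> [disjoint W r & W s]) &
           \bigcup_(r : I) W r = V] &
      (forall u v, ET u v ->
         normal V E (X u v) (\bigcup_(r | connect ET v r) W r))].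

Definition dtree_bag (I : finType) (ET : rel I) (X : I -> I -> {set T})
  (W : I -> {set T}) (r : I) : {set T} :=
  W r :|: (\bigcup_(u | ET u r) X u r) :|: (\bigcup_(v | ET r v) X r v).

Definition dtree_width (I : finType) (ET : rel I) (X : I -> I -> {set T})
  (W : I -> {set T}) : nat :=
  (\max_(r : I) #|dtree_bag ET X W r|) - 1.

End Digraphs.

Definition min_nat (P : nat -> Prop) : nat :=
  epsilon (inhabits 0) (fun n => P n /\ forall m, P m -> n <= m).

Definition dpw (T : finType) (V : {set T}) (E : {set T * T}) : nat :=
  min_nat (fun k => exists X, is_dpath_decomp V E X /\ dpath_width X = k).

Definition dtw (T : finType) (V : {set T}) (E : {set T * T}) : nat :=
  min_nat (fun k => exists (I : finType) (ET : rel I)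
                      (X : I -> I -> {set T}) (W : I -> {set T}),
                      is_dtree_decomp V E ET X W /\ dtree_width ET X W = k).

From mathcomp Require Import all_boot zify.
From Stdlib Require Import ClassicalEpsilon.

Set Implicit Arguments.
Unset Strict Implicit.
Unset Printing Implicit Defensive.

(* Along the co-graph decomposition we build a number [k], a haven of order
   [k + 1] and a directed path decomposition of width [k].  A haven forces a
   bag of size [k + 1] in every directed tree decomposition (otherwise the
   haven could be followed down the out-tree forever), and a path
   decomposition becomes a tree decomposition of no larger width (a path of
   single-vertex nodes, ordered by first occurrence in the bags), so
   [k <= dtw <= dpw <= k].
   For a directed union, concatenate the path decompositions of the parts and
   lift the haven of a part of maximal width.  For a series composition, take
   a part [A] minimising [k_A + #|V :\: A|], add [V :\: A] to each of its
   bags, and let the haven at [Z] be that of [A] when [Z] contains all other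
   parts and [V :\: Z] otherwise. *)

Lemma min_natP (P : nat -> Prop) m : P m ->
  P (min_nat P) /\ forall n, P n -> min_nat P <= n.
Proof.
move=> Pm; apply: (epsilon_spec (inhabits 0) (fun n => P n /\ forall m, P m -> n <= m)).
elim/ltn_ind: m Pm => m IH Pm.
have [[m' m'_lt_m Pm'] | no_smaller] := classic (exists2 m', m' < m & P m').
  exact: IH m'_lt_m Pm'.
exists m; split=> // m' Pm'; rewrite leqNgt; apply/negP=> m'_lt_m.
by apply: no_smaller; exists m'.
Qed.

Lemma min_nat_le (P : nat -> Prop) n : P n -> min_nat P <= n.
Proof. by move=> Pn; apply: (min_natP Pn).2. Qed.

Lemma min_natE (P : nat -> Prop) n : P n -> P (min_nat P).
Proof. by move=> Pn; apply: (min_natP Pn).1. Qed.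

Lemma seq_extremum (I : eqType) (r : rel I) (s : seq I) :
  total r -> transitive r -> 0 < size s ->
  exists2 x, x \in s & {in s, forall y, r x y}.
Proof.
move=> r_total r_trans; rewrite -(size_sort r) => s_gt0.
have sorted_s := sort_sorted r_total s.
case Es: (sort r s) s_gt0 sorted_s => [|x t] // _ sorted_s.
exists x; first by rewrite -(mem_sort r) Es mem_head.
move=> y; rewrite -(mem_sort r) Es inE => /predU1P[-> | y_t].
  by have := r_total x x; rewrite orbb.
exact: (allP (order_path_min r_trans sorted_s)).
Qed.

Section Havens.
Variable T : finType.
Implicit Types (V U Z S C : {set T}) (E : {set T * T}).

Definition strongly_connected E U C :=
  forall x y, x \in C -> y \in C ->
  exists p, [&& dwalk E x p, all (fun z => z \in U) p & last x p == y].

Definition strong_set V E Z C :=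
  [/\ C != set0, C \subset V :\: Z & strongly_connected E (V :\: Z) C].

(* A haven of order [k + 1] in the usual terminology: [h] is defined on all
   [Z] with [#|Z| <= k]. *)
Definition haven V E k (h : {set T} -> {set T}) :=
  (forall Z, #|Z| <= k -> strong_set V E Z (h Z)) /\
  (forall Z Z', Z \subset Z' -> #|Z'| <= k -> h Z' \subset h Z).

Lemma strongly_connectedW E U U' C :
  U \subset U' -> strongly_connected E U C -> strongly_connected E U' C.
Proof.
move=> sUU' scC x y xC yC; have [p /and3P[walk_p p_U last_p]] := scC x y xC yC.
exists p; rewrite walk_p last_p andbT /=.
by apply/allP=> z /(allP p_U); apply: (subsetP sUU').
Qed.

(* A closed walk through [y] and [z] inside [G - Z] starts and ends in [S],
   so it stays in [S :|: Z]. *)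
Lemma strong_set_normal_sub V E Z S C y :
  strong_set V E Z C -> normal V E Z S -> y \in C -> y \in S -> C \subset S.
Proof.
move=> [_ sC scC] normS yC yS; apply/subsetP=> z zC.
have [p /and3P[walk_p p_VZ /eqP last_p]] := scC y z yC zC.
have [q /and3P[walk_q q_VZ /eqP last_q]] := scC z y zC yC.
have := normS y (p ++ q).
rewrite /dwalk in walk_p walk_q *.
rewrite cat_path walk_p last_p walk_q last_cat last_p last_q /=.
rewrite all_cat p_VZ q_VZ (subsetP sC) // => /(_ isT isT yS yS).
case/andP=> _; rewrite all_cat => /andP[/allP p_SZ _].
have : z \in y :: p by rewrite -last_p mem_last.
rewrite inE => /predU1P[-> // | z_p].
have /setUP[// | zZ] := p_SZ z z_p.
by have := subsetP sC z zC; rewrite inE zZ.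
Qed.

End Havens.

(* A node on a cycle has its unique in-neighbour on the cycle as well, so going
   back along the path from the root would put the root on a cycle. *)
Lemma out_tree_acyclic (I : finType) (ET : rel I) :
  out_tree ET -> forall u v, ET u v -> ~~ connect ET v u.
Proof.
case=> r [no_pred_r unique_pred reach].
pose on_cycle w := exists2 u, ET w u & connect ET u w.
have pred_on_cycle a : on_cycle a -> exists2 b, ET b a & connect ET a b.
  move=> [u au /connectP[q]]; elim/last_ind: q => [|q c _] /=.
    by move=> _ a_u; exists a; rewrite // {2}a_u.
  rewrite rcons_path last_rcons => /andP[q_path q_c] a_c; subst a.
  exists (last u q) => //; apply: connect_trans (connect1 au) _.
  by apply/connectP; exists q.
have no_cycle w : ~ on_cycle w.
  have /connectP[p] := reach w; elim/last_ind: p w => [|p a IH] w /=.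
    by move=> _ -> /pred_on_cycle[b]; rewrite (negbTE (no_pred_r b)).
  rewrite rcons_path last_rcons => /andP[p_path p_a] -> /pred_on_cycle[b ba ab].
  apply: (IH _ p_path erefl); exists a => //.
  have a_ne_r : a != r by apply: contraTneq p_a => ->; rewrite no_pred_r.
  have [u0 [_ unique_u0]] := unique_pred a a_ne_r.
  by rewrite -(unique_u0 _ p_a) (unique_u0 _ ba).
by move=> u v uv; apply/negP=> vu; apply: (no_cycle u); exists v.
Qed.

Section HavenLowerBound.
Variables (T : finType) (V : {set T}) (E : {set T * T}).
Variables (k : nat) (h : {set T} -> {set T}).
Variables (I : finType) (ET : rel I) (X : I -> I -> {set T}) (W : I -> {set T}).
Hypothesis haven_h : haven V E k h.
Hypothesis decomp : is_dtree_decomp V E ET X W.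
Hypothesis small_bags : forall r, #|dtree_bag ET X W r| <= k.

Let bag := dtree_bag ET X W.
Let below c := \bigcup_(r | connect ET c r) W r.

Lemma haven_descends c : h (bag c) \subset below c ->
  exists2 c', ET c c' & h (bag c') \subset below c'.
Proof.
have [[ok_h mono_h] [_ _ _ normal_below]] := (haven_h, decomp).
move=> h_below; have [h_ne h_sub _] := ok_h _ (small_bags c).
have [y y_h] := set0Pn _ h_ne.
have /bigcupP[r c_r y_r] := subsetP h_below y y_h.
have r_ne_c : r != c.
  apply: contraTneq (subsetP h_sub y y_h) => r_c.
  by rewrite -r_c /bag /dtree_bag !inE y_r.
have [c' cc' c'_r] : exists2 c', ET c c' & connect ET c' r.
  case/connectP: c_r => [[|c' p] /= path_p r_last].
    by rewrite r_last eqxx in r_ne_c.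
  by case/andP: path_p => cc' path_p; exists c'; last by apply/connectP; exists p.
exists c' => //.
have X_bag_c : X c c' \subset bag c.
  by apply/subsetP=> x x_X; rewrite !inE; apply/orP; right; apply/bigcupP; exists c'.
have X_bag_c' : X c c' \subset bag c'.
  apply/subsetP=> x x_X; rewrite !inE; apply/orP; left.
  by apply/orP; right; apply/bigcupP; exists c.
have small_X := leq_trans (subset_leq_card X_bag_c) (small_bags c).
have y_hX : y \in h (X c c') by apply: (subsetP (mono_h _ _ X_bag_c (small_bags c))).
have y_below' : y \in below c' by apply/bigcupP; exists r.
apply: subset_trans (mono_h _ _ X_bag_c' (small_bags c')) _.
exact: strong_set_normal_sub (ok_h _ small_X) (normal_below _ _ cc') y_hX y_below'.
Qed.

Lemma haven_bags_not_small : False.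
Proof.
have [[ok_h _] [tree _ [_ _ W_cover] _]] := (haven_h, decomp).
have [r0 [_ _ reach]] := tree.
suff no_descent n c : #|[set r | connect ET c r]| <= n -> ~ h (bag c) \subset below c.
  apply: (no_descent _ r0 (leqnn _)); have [_ h_sub _] := ok_h _ (small_bags r0).
  apply: subset_trans h_sub _; apply/subsetP=> x /setDP[xV _].
  by move: xV; rewrite -W_cover => /bigcupP[r _ x_r]; apply/bigcupP; exists r.
elim: n c => [|n IH] c size_c /haven_descends[c' cc' h_below'].
  by move: size_c; rewrite leqn0 => /eqP/cards0_eq/setP/(_ c); rewrite !inE connect0.
apply: (IH c') h_below'; rewrite -ltnS; apply: leq_trans size_c.
apply: proper_card; apply/properP; split.
  by apply/subsetP=> x; rewrite !inE; apply: connect_trans (connect1 cc').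
by exists c; rewrite !inE ?connect0 // (out_tree_acyclic tree cc').
Qed.

End HavenLowerBound.

Lemma haven_order_lt_bag (T : finType) (V : {set T}) E k h
    (I : finType) (ET : rel I) X W :
  haven V E k h -> is_dtree_decomp V E ET X W ->
  k < \max_(r : I) #|dtree_bag ET X W r|.
Proof.
move=> haven_h decomp; rewrite ltnNge; apply/negP => /bigmax_leqP small_bags.
exact: (haven_bags_not_small haven_h decomp (fun r => small_bags r isT)).
Qed.

Lemma out_closed_normal (T : finType) (V Z S : {set T}) (E : {set T * T}) :
  (forall y z, y \in S -> (y, z) \in E -> z \in V :\: Z -> z \in S) ->
  normal V E Z S.
Proof.
move=> closedS x p walk_p p_VZ xS _.
suff: all (fun y => y \in S) (x :: p) by apply: sub_all => y; rewrite inE => ->.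
elim: p x walk_p p_VZ xS => [|y p IH] x /=; first by move=> _ _ ->.
case/andP=> xy walk_p /and3P[_ yVZ p_VZ] xS; rewrite xS /=.
by apply: IH => //=; [rewrite yVZ | exact: closedS xy yVZ].
Qed.

Section LineOutTree.
Variable n : nat.

Definition succ_ord : rel 'I_n := fun a b => val b == (val a).+1.

Lemma connect_succ_ord (i j : 'I_n) : connect succ_ord i j = (i <= j).
Proof.
apply/idP/idP.
  case/connectP=> p + ->; elim: p i => [|c p IH] i //= /andP[/eqP ci path_p].
  by apply: leq_trans (IH _ path_p); rewrite ci.
move=> i_le_j; have [d j_eq] : exists d, val j = i + d by exists (j - i); rewrite subnKC.
elim: d i j_eq {i_le_j} => [|d IH] i j_eq.
  by rewrite (_ : j = i) //; apply: val_inj; rewrite j_eq addn0.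
have i1_lt : i.+1 < n.
  by rewrite -(addn1 i) (leq_ltn_trans _ (ltn_ord j)) // j_eq leq_add2l.
apply: (@connect_trans _ _ (Ordinal i1_lt)).
  by apply: connect1; rewrite /succ_ord /=.
by apply: IH; rewrite j_eq /= addSnnS.
Qed.

Lemma succ_ord_out_tree : 0 < n -> out_tree succ_ord.
Proof.
move=> n_gt0; exists (Ordinal n_gt0); split=> [u | v v_ne0 | v].
- by rewrite /succ_ord.
- have v_gt0 : 0 < val v by rewrite lt0n; apply: contra v_ne0 => /eqP v0; apply/eqP/val_inj.
  have pv_lt : (val v).-1 < n := leq_ltn_trans (leq_pred _) (ltn_ord v).
  exists (Ordinal pv_lt); split; first by rewrite /succ_ord /= prednK.
  by move=> u /eqP uv; apply: val_inj; rewrite /= uv.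
- by rewrite connect_succ_ord.
Qed.

End LineOutTree.

Section PathToTreeDecomposition.
Variables (T : finType) (V : {set T}) (E : {set T * T}) (X : seq {set T}).
Hypothesis decomp : is_dpath_decomp V E X.
Variable x0 : T.

Let bag i := nth set0 X i.
Let first_bag v := find (fun B : {set T} => v \in B) X.

Lemma first_bagP v : v \in V -> first_bag v < size X /\ v \in bag (first_bag v).
Proof.
have [_ X_cover _ _] := decomp.
rewrite -X_cover bigcup_seq => /bigcupP[B B_X vB].
have has_v : has (fun B : {set T} => v \in B) X by apply/hasP; exists B.
by split; [rewrite -has_find | exact: (nth_find set0 has_v)].
Qed.

Lemma first_bag_min v i : v \in bag i -> first_bag v <= i.
Proof.
move=> v_i; rewrite leqNgt; apply/negP=> i_lt.
by have := before_find set0 i_lt; rewrite v_i.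
Qed.

Let le_first u w := first_bag u <= first_bag w.
Let nV := #|V|.
Let vseq := sort le_first (enum V).
Let vtx (i : 'I_nV) := nth x0 vseq i.

Lemma size_vseq : size vseq = nV.
Proof. by rewrite size_sort /nV cardE. Qed.

Lemma vtx_in i : vtx i \in V.
Proof. by rewrite -mem_enum -(mem_sort le_first) mem_nth ?size_vseq. Qed.

Lemma vtx_inj : injective vtx.
Proof.
move=> i j /eqP; rewrite nth_uniq ?size_vseq ?sort_uniq ?enum_uniq //.
by move=> /eqP; apply: val_inj.
Qed.

Lemma vtx_onto v : v \in V -> exists i, vtx i = v.
Proof.
rewrite -mem_enum -(mem_sort le_first) => v_seq.
have i_lt : index v vseq < nV by rewrite -size_vseq index_mem.
by exists (Ordinal i_lt); rewrite /vtx nth_index.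
Qed.

Lemma first_bag_vtx_mono (i j : 'I_nV) :
  i <= j -> first_bag (vtx i) <= first_bag (vtx j).
Proof.
move=> i_le_j; apply: (sorted_leq_nth (leT := le_first)).
- by move=> y x z; apply: leq_trans.
- by move=> x; apply: leqnn.
- by apply: sort_sorted => u w; apply: leq_total.
- by rewrite inE size_vseq.
- by rewrite inE size_vseq.
- exact: i_le_j.
Qed.

Let node_bag r := bag (first_bag (vtx r)).
Let Wt (r : 'I_nV) := [set vtx r].
Let Xt (r s : 'I_nV) := node_bag r :&: node_bag s.

Lemma dtree_bag_sub r : dtree_bag (@succ_ord nV) Xt Wt r \subset node_bag r.
Proof.
apply/subsetP=> x; rewrite /dtree_bag !inE => /orP[/orP[/eqP-> | ] | ].
- by case: (first_bagP (vtx_in r)).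
- by case/bigcupP=> u _; rewrite inE => /andP[_ ->].
- by case/bigcupP=> u _; rewrite inE => /andP[-> _].
Qed.

(* An arc from [vtx j] back to [vtx j'] with [j' <= u < v <= j] forces, by
   the interval property of [X], its head into both [node_bag u] and
   [node_bag v]. *)
Lemma succ_ord_normal u v : succ_ord u v ->
  normal V E (Xt u v) (\bigcup_(r | connect (@succ_ord nV) v r) Wt r).
Proof.
have [_ _ arcs interval] := decomp.
move=> /eqP v_eq; apply: out_closed_normal => y z.
case/bigcupP=> j; rewrite connect_succ_ord inE => v_le_j /eqP-> yz.
case/setDP=> zV z_notX; have [j' zj'] := vtx_onto zV.
have [v_le_j' | j'_lt_v] := leqP v j'.
  by apply/bigcupP; exists j'; rewrite ?connect_succ_ord // -zj' inE.
have [i1 [i2 [i12 i2_lt y_i1 z_i2]]] := arcs _ _ yz.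
have fb_uv : first_bag (vtx u) <= first_bag (vtx v).
  by apply: first_bag_vtx_mono; rewrite v_eq.
have fb_vj := first_bag_vtx_mono v_le_j.
have fb_j'u : first_bag (vtx j') <= first_bag (vtx u).
  by apply: first_bag_vtx_mono; rewrite -ltnS -v_eq.
have fb_y := first_bag_min y_i1.
have [_ z_first] := first_bagP zV.
have z_bag w : first_bag (vtx u) <= w -> w <= first_bag (vtx v) -> z \in bag w.
  move=> lo hi; apply: (interval z (first_bag z) w i2) => //; first by rewrite -zj'; lia.
  lia.
by move: z_notX; rewrite !inE !z_bag.
Qed.

Lemma succ_ord_dtree_decomp : 0 < nV -> is_dtree_decomp V E (@succ_ord nV) Xt Wt.
Proof.
have [X_sub _ _ _] := decomp.
have node_bag_sub r : node_bag r \subset V.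
  by apply: X_sub; apply: mem_nth; case: (first_bagP (vtx_in r)).
move=> nV_gt0; split.
- exact: succ_ord_out_tree.
- by move=> u v _; apply: subset_trans (subsetIl _ _) (node_bag_sub u).
- split.
  + by move=> r; apply/set0Pn; exists (vtx r); rewrite inE.
  + move=> r s r_ne_s; rewrite disjoints1 inE.
    by apply: contra r_ne_s => /eqP/vtx_inj->.
  + apply/setP=> x; apply/bigcupP/idP => [[r _] | xV].
      by rewrite inE => /eqP->; apply: vtx_in.
    by have [i <-] := vtx_onto xV; exists i; rewrite ?inE.
- exact: succ_ord_normal.
Qed.

Lemma succ_ord_dtree_width : dtree_width (@succ_ord nV) Xt Wt <= dpath_width X.
Proof.
rewrite /dtree_width /dpath_width leq_sub2r //; apply/bigmax_leqP => r _.
apply: leq_trans (subset_leq_card (dtree_bag_sub r)) _.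
by apply: leq_bigmax_seq => //; apply: mem_nth; case: (first_bagP (vtx_in r)).
Qed.

End PathToTreeDecomposition.

Lemma dtree_decomp_of_dpath_decomp (T : finType) (V : {set T}) E X :
  0 < #|V| -> is_dpath_decomp V E X ->
  exists (I : finType) (ET : rel I) (Xt : I -> I -> {set T}) (W : I -> {set T}),
    is_dtree_decomp V E ET Xt W /\ dtree_width ET Xt W <= dpath_width X.
Proof.
move=> V_gt0 decomp; have /card_gt0P[x0 _] := V_gt0.
have tree := succ_ord_dtree_decomp decomp x0 V_gt0.
by do 4 eexists; split; [exact: tree | exact: succ_ord_dtree_width decomp x0].
Qed.

Section Compositions.
Variable T : finType.
Implicit Types (V A : {set T}) (E : {set T * T}) (X P : seq {set T}).

Lemma bigcup_nthP X v :
  reflect (exists2 i, i < size X & v \in nth set0 X i) (v \in \bigcup_(B <- X) B).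
Proof.
rewrite bigcup_seq; apply: (iffP bigcupP) => [[B B_X vB] | [i i_lt v_i]].
  by exists (index B X); rewrite ?index_mem ?nth_index.
by exists (nth set0 X i); rewrite ?mem_nth.
Qed.

Lemma inducedP E A u v :
  ((u, v) \in induced E A) = [&& (u, v) \in E, u \in A & v \in A].
Proof. by rewrite inE. Qed.

Lemma induced_id E V : E \subset setX V V -> induced E V = E.
Proof.
move=> sE; apply/setP=> [[u v]]; rewrite inducedP.
by case uv: ((u, v) \in E) => //=; have := subsetP sE _ uv; rewrite inE.
Qed.

Lemma dpath_decomp_nth_sub V E X i : is_dpath_decomp V E X -> nth set0 X i \subset V.
Proof.
case=> X_sub _ _ _; have [i_lt | i_ge] := ltnP i (size X).
  by apply: X_sub; apply: mem_nth.
by rewrite nth_default ?sub0set.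
Qed.

Lemma dpath_decomp_size_gt0 V E X : 0 < #|V| -> is_dpath_decomp V E X -> 0 < size X.
Proof.
move=> V_gt0 [_ X_cover _ _]; rewrite lt0n; apply: contraTneq V_gt0 => /size0nil X0.
by rewrite -X_cover X0 big_nil cards0.
Qed.

Lemma dpath_decomp_cat E V1 V2 X1 X2 : [disjoint V1 & V2] ->
  is_dpath_decomp V1 (induced E V1) X1 -> is_dpath_decomp V2 (induced E V2) X2 ->
  (forall u v, (u, v) \in E -> u \in V2 -> v \notin V1) ->
  is_dpath_decomp (V1 :|: V2) (induced E (V1 :|: V2)) (X1 ++ X2).
Proof.
move=> dis decomp1 decomp2 no_back.
have [X1_sub X1_cover arcs1 interval1] := decomp1.
have [X2_sub X2_cover arcs2 interval2] := decomp2.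
have in1 i : {subset nth set0 X1 i <= V1}.
  exact/subsetP/(dpath_decomp_nth_sub _ decomp1).
have in2 i : {subset nth set0 X2 i <= V2}.
  exact/subsetP/(dpath_decomp_nth_sub _ decomp2).
have nthL i : i < size X1 -> nth set0 (X1 ++ X2) i = nth set0 X1 i.
  by move=> i_lt; rewrite nth_cat i_lt.
have nthR i : nth set0 (X1 ++ X2) (size X1 + i) = nth set0 X2 i.
  by rewrite nth_cat ltnNge leq_addr addKn.
split.
- move=> B; rewrite mem_cat => /orP[/X1_sub | /X2_sub] sB.
    exact: subset_trans sB (subsetUl _ _).
  exact: subset_trans sB (subsetUr _ _).
- by rewrite big_cat /= X1_cover X2_cover.
- move=> u v; rewrite inducedP !inE size_cat => /and3P[uv /orP[u1 | u2] /orP[v1 | v2]].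
  + have [|i [j [ij j_lt ui vj]]] := arcs1 u v; first by rewrite inducedP uv u1 v1.
    have i_lt := leq_ltn_trans ij j_lt.
    by exists i, j; rewrite !nthL //; split=> //; lia.
  + move: u1 v2; rewrite -X1_cover -X2_cover.
    move=> /bigcup_nthP[i i_lt ui] /bigcup_nthP[j j_lt vj].
    by exists i, (size X1 + j); rewrite nthL // nthR; split=> //; lia.
  + by have := no_back u v uv u2; rewrite v1.
  + have [|i [j [ij j_lt ui vj]]] := arcs2 u v; first by rewrite inducedP uv u2 v2.
    by exists (size X1 + i), (size X1 + j); rewrite !nthR; split=> //; lia.
- move=> x i j k ij jk; rewrite size_cat => k_lt; rewrite !nth_cat.
  have [k1 | k1] := ltnP k (size X1).
    have j1 := leq_ltn_trans jk k1.
    by rewrite (leq_ltn_trans ij j1) j1; apply: interval1.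
  have [i1 xi | i1] := ltnP i (size X1).
    by move=> /in2 x2; have := disjointFr dis (in1 _ _ xi); rewrite x2.
  rewrite ltnNge (leq_trans i1 ij) /=.
  by apply: interval2; lia.
Qed.

Lemma dpath_decomp_flatten E P (Xf : {set T} -> seq {set T}) :
  (forall i j, i < j -> j < size P -> [disjoint nth set0 P i & nth set0 P j]) ->
  (forall A, A \in P -> is_dpath_decomp A (induced E A) (Xf A)) ->
  (forall i j u v, i < size P -> j < size P -> u \in nth set0 P i ->
     v \in nth set0 P j -> (u, v) \in E -> i <= j) ->
  is_dpath_decomp (\bigcup_(A <- P) A) (induced E (\bigcup_(A <- P) A))
    (flatten (map Xf P)).
Proof.
elim: P => [|A P IH] dis decomps forward /=.
  by rewrite big_nil; split=> // [|u v]; rewrite ?big_nil // inducedP inE andbF.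
rewrite big_cons; apply: dpath_decomp_cat.
- rewrite bigcup_seq; apply/bigcup_disjointP => B B_P.
  rewrite -(nth_index set0 B_P).
  by apply: (dis 0 (index B P).+1); rewrite //= ltnS index_mem.
- by apply: decomps; rewrite mem_head.
- apply: IH => [i j ij j_lt | B B_P | i j u v i_lt j_lt ui vj uv].
  + exact: (dis i.+1 j.+1).
  + by apply: decomps; rewrite inE B_P orbT.
  + exact: (forward i.+1 j.+1 u v).
- move=> u v uv /bigcup_nthP[j j_lt uj]; apply/negP => vA.
  by have := forward j.+1 0 u v j_lt isT uj vA uv.
Qed.

Lemma dpath_decomp_extend V E A X :
  A \subset V -> E \subset setX V V -> 0 < size X ->
  is_dpath_decomp A (induced E A) X ->
  is_dpath_decomp V E (map (fun B => B :|: (V :\: A)) X).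
Proof.
move=> sA sE X_gt0 decomp; have [X_sub X_cover arcs interval] := decomp.
set D := V :\: A; set XD := map _ X.
have nthD i : i < size X -> nth set0 XD i = nth set0 X i :|: D.
  by move=> i_lt; rewrite (nth_map set0).
have in_some_bag y : y \in V -> exists2 i, i < size X & y \in nth set0 XD i.
  move=> yV; have [yA | yD] := boolP (y \in A).
    move: yA; rewrite -X_cover => /bigcup_nthP[i i_lt y_i].
    by exists i; rewrite ?nthD ?inE ?y_i.
  by exists 0; rewrite ?nthD // !inE yD yV orbT.
have D_in_all i y : i < size X -> y \in V -> y \notin A -> y \in nth set0 XD i.
  by move=> i_lt yV yA; rewrite nthD // !inE yA yV orbT.
split.
- move=> B /mapP[B0 B0_X ->]; rewrite subUset subsetDl andbT.
  exact: subset_trans (X_sub _ B0_X) sA.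
- apply/setP=> x; apply/bigcup_nthP/idP => [[i] | xV].
    rewrite size_map => i_lt; rewrite nthD // !inE => /orP[x_i | /andP[//]].
    by apply: (subsetP sA); rewrite -X_cover; apply/bigcup_nthP; exists i.
  by have [i i_lt x_i] := in_some_bag x xV; exists i; rewrite ?size_map.
- move=> u v uv; have /setXP[uV vV] := subsetP sE _ uv; rewrite size_map.
  have [uA | uD] := boolP (u \in A); last first.
    by have [j j_lt vj] := in_some_bag v vV; exists j, j; split=> //; exact: D_in_all.
  have [vA | vD] := boolP (v \in A); last first.
    by have [i i_lt ui] := in_some_bag u uV; exists i, i; split=> //; exact: D_in_all.
  have [|i [j [ij j_lt ui vj]]] := arcs u v; first by rewrite inducedP uv uA vA.
  by exists i, j; rewrite !nthD ?inE ?ui ?vj //; apply: leq_ltn_trans ij j_lt.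
- move=> x i j k ij jk; rewrite size_map => k_lt.
  rewrite !nthD ?in_setU; try lia.
  by case: (x \in D); rewrite ?orbT ?orbF //; apply: interval.
Qed.

End Compositions.

Section HavenCompositions.
Variable T : finType.
Implicit Types (V A Z C : {set T}) (E : {set T * T}) (P : seq {set T}).

Lemma parts_sub P V A : ordered_parts P V -> A \in P -> A \subset V.
Proof. by case=> _ _ <- A_P; rewrite bigcup_seq (bigcup_sup A). Qed.

Lemma parts_disjoint P V A A' : ordered_parts P V -> A \in P -> A' \in P ->
  A != A' -> [disjoint A & A'].
Proof.
case=> _ dis _ A_P A'_P; rewrite -(nth_index set0 A_P) -(nth_index set0 A'_P).
have [ij | ji | ->] := ltngtP (index A P) (index A' P); last by rewrite eqxx.
- by move=> _; apply: dis; rewrite ?index_mem.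
- by move=> _; rewrite disjoint_sym; apply: dis; rewrite ?index_mem.
Qed.

Lemma parts_index P V v : ordered_parts P V -> v \in V ->
  exists2 i, i < size P & v \in nth set0 P i.
Proof. by case=> _ _ <- /bigcup_nthP. Qed.

Lemma strong_set_lift V E A Z C : A \subset V ->
  strong_set A (induced E A) (Z :&: A) C -> strong_set V E Z C.
Proof.
move=> sA [C_ne C_sub scC].
have sAV : A :\: (Z :&: A) \subset V :\: Z.
  apply/subsetP=> x /setDP[xA]; rewrite !inE xA andbT => -> /=.
  exact: (subsetP sA).
split=> //; first exact: subset_trans C_sub sAV.
apply: strongly_connectedW sAV _ => x y xC yC.
have [p /and3P[walk_p p_U last_p]] := scC x y xC yC.
exists p; rewrite p_U last_p !andbT /dwalk.
by apply: sub_path walk_p => a b /=; rewrite inducedP => /andP[].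
Qed.

Lemma haven_lift V E A k h : A \subset V ->
  haven A (induced E A) k h -> haven V E k (fun Z => h (Z :&: A)).
Proof.
move=> sA [ok_h mono_h]; split=> [Z Z_le | Z Z' sZ Z'_le].
  apply: strong_set_lift sA _; apply: ok_h.
  by rewrite (leq_trans _ Z_le) ?subset_leq_card ?subsetIl.
by apply: mono_h; rewrite ?setSI // (leq_trans _ Z'_le) ?subset_leq_card ?subsetIl.
Qed.

Section SeriesHaven.
Variables (V : {set T}) (E : {set T * T}) (P : seq {set T}).
Variables (K : {set T} -> nat) (H : {set T} -> {set T} -> {set T}) (k : nat).
Hypothesis parts : ordered_parts P V.
Hypothesis series : forall i j u v, i < size P -> j < size P -> i != j ->
  u \in nth set0 P i -> v \in nth set0 P j -> (u, v) \in E.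
Hypothesis havens : forall A, A \in P -> haven A (induced E A) (K A) (H A).
Hypothesis k_le : forall A, A \in P -> k <= K A + #|V :\: A|.
Hypothesis k_lt : k < #|V|.

Definition series_haven Z :=
  if [pick A in P | V :\: A \subset Z] is Some A then H A (Z :&: A) else V :\: Z.

Lemma card_setI_part Z A : A \in P -> V :\: A \subset Z -> #|Z| <= k ->
  #|Z :&: A| <= K A.
Proof.
move=> A_P sVA Z_le; have := k_le A_P.
have disj : (Z :&: A) :&: (V :\: A) = set0.
  by apply/setP=> x; rewrite !inE; case: (x \in A); rewrite ?andbF.
have := cardsU (Z :&: A) (V :\: A); rewrite disj cards0 subn0.
have : #|(Z :&: A) :|: (V :\: A)| <= #|Z| by rewrite subset_leq_card // subUset subsetIl.
lia.
Qed.

Lemma complement_strong Z : (forall A, A \in P -> ~~ (V :\: A \subset Z)) ->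
  strong_set V E Z (V :\: Z).
Proof.
move=> not_cover.
have outside i : i < size P -> exists2 z, z \in V :\: Z & z \notin nth set0 P i.
  move=> i_lt; have /subsetPn[z] := not_cover _ (mem_nth set0 i_lt).
  by rewrite !inE => /andP[z_i zV] zZ; exists z; rewrite ?inE ?zZ.
have [P_gt0 _ _] := parts.
split=> //; first by have [z z_out _] := outside 0 P_gt0; apply/set0Pn; exists z.
move=> x y /setDP[xV xZ] /setDP[yV yZ].
have [i i_lt xi] := parts_index parts xV; have [j j_lt yj] := parts_index parts yV.
have [i_eq_j | i_ne_j] := eqVneq i j; last first.
  by exists [:: y]; rewrite /dwalk /= !inE yZ yV (series i_lt j_lt i_ne_j xi yj) eqxx.
subst j.
have [z z_out z_i] := outside i i_lt; move: (z_out) => /setDP[zV zZ].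
have [l l_lt zl] := parts_index parts zV.
have i_ne_l : i != l by apply: contraNneq z_i => ->.
exists [:: z; y]; rewrite /dwalk /= !inE zZ zV yZ yV eqxx /=.
by rewrite (series i_lt l_lt i_ne_l xi zl) (series l_lt i_lt _ zl yj) // eq_sym.
Qed.

Lemma series_haven_strong Z : #|Z| <= k -> strong_set V E Z (series_haven Z).
Proof.
rewrite /series_haven => Z_le; case: pickP => [A /andP[A_P sVA] | no_part].
  have [ok_h _] := havens A_P.
  apply: strong_set_lift (parts_sub parts A_P) _.
  exact: ok_h _ (card_setI_part A_P sVA Z_le).
by apply: complement_strong => A A_P; have := no_part A; rewrite /= A_P /= => ->.
Qed.

Lemma series_haven_mono Z Z' : Z \subset Z' -> #|Z'| <= k ->
  series_haven Z' \subset series_haven Z.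
Proof.
move=> sZ Z'_le; have Z_le := leq_trans (subset_leq_card sZ) Z'_le.
have [_ h_sub _] := series_haven_strong Z'_le.
rewrite /series_haven in h_sub *.
case: pickP h_sub => [A' /andP[A'_P sVA'] | no_part'] h_sub; last first.
  case: pickP => [A /andP[A_P sVA] | _]; last exact: setDS.
  by have := no_part' A; rewrite /= A_P (subset_trans sVA sZ).
case: pickP => [A /andP[A_P sVA] | _]; last by apply: subset_trans h_sub (setDS _ _).
have [A_eq | A_ne_A'] := eqVneq A A'.
  subst A'; have [_ mono_h] := havens A_P.
  by apply: mono_h; [exact: setSI | exact: card_setI_part A_P sVA' Z'_le].
have V_sub : V \subset Z'.
  apply/subsetP=> x xV; have [xA | xA] := boolP (x \in A).
    have dis := parts_disjoint parts A_P A'_P A_ne_A'.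
    by apply: (subsetP sVA'); rewrite inE xV (disjointFr dis xA).
  by apply: (subsetP sZ); apply: (subsetP sVA); rewrite inE xA.
by have := subset_leq_card V_sub; lia.
Qed.

Lemma haven_series : haven V E k series_haven.
Proof. by split; [exact: series_haven_strong | exact: series_haven_mono]. Qed.

End SeriesHaven.

End HavenCompositions.

Section Certificates.
Variable T : finType.
Implicit Types (V A : {set T}) (E : {set T * T}) (P X : seq {set T}).

Definition width_certificate V E k (h : {set T} -> {set T}) X :=
  [/\ haven V E k h, k < #|V|, is_dpath_decomp V E X &
      forall B, B \in X -> #|B| <= k.+1].

Lemma certificate_single v :
  width_certificate [set v] set0 0 (fun _ => [set v]) [:: [set v]].
Proof.
split; rewrite ?cards1 //.
- split=> [Z | Z Z' _ _]; last exact: subxx.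
  rewrite leqn0 => /eqP/cards0_eq ->.
  split; rewrite ?setD0 //; first by apply/set0Pn; exists v; rewrite inE.
  by move=> x y /set1P-> /set1P->; exists [::]; rewrite /dwalk /= eqxx.
- split=> [B | | u w | x i j l ij jl]; rewrite ?inE //.
  + by move=> /eqP->.
  + by rewrite big_seq1.
  + rewrite /= ltnS leqn0 => /eqP l0.
    have -> : j = 0 by lia.
    by have -> : i = 0 by lia.
- by move=> B; rewrite inE => /eqP->; rewrite cards1.
Qed.

Lemma certificate_dunion V E P K H Xf :
  ordered_parts P V -> E \subset setX V V ->
  (forall A, A \in P -> width_certificate A (induced E A) (K A) (H A) (Xf A)) ->
  (forall i j u v, i < size P -> j < size P ->
     u \in nth set0 P i -> v \in nth set0 P j -> (u, v) \in E -> i <= j) ->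
  exists k h X, width_certificate V E k h X.
Proof.
move=> parts sE certs forward; have [P_gt0 dis cover] := parts.
have [Am Am_P K_max] := seq_extremum (r := fun A B => K B <= K A)
  (fun A B => leq_total (K B) (K A)) (fun B A C AB BC => leq_trans BC AB) P_gt0.
have [haven_m k_lt _ _] := certs Am Am_P; have sAm := parts_sub parts Am_P.
exists (K Am), (fun Z => H Am (Z :&: Am)), (flatten (map Xf P)); split.
- exact: haven_lift.
- exact: leq_trans k_lt (subset_leq_card sAm).
- rewrite -(induced_id sE) -cover; apply: dpath_decomp_flatten => // A A_P.
  by case: (certs A A_P).
- move=> B /flattenP[_ /mapP[A A_P ->] B_A]; have [_ _ _ small] := certs A A_P.
  by apply: leq_trans (small B B_A) _; rewrite ltnS K_max.
Qed.

Lemma certificate_series V E P K H Xf :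
  ordered_parts P V -> E \subset setX V V ->
  (forall A, A \in P -> width_certificate A (induced E A) (K A) (H A) (Xf A)) ->
  (forall i j u v, i < size P -> j < size P -> i != j ->
     u \in nth set0 P i -> v \in nth set0 P j -> (u, v) \in E) ->
  exists k h X, width_certificate V E k h X.
Proof.
move=> parts sE certs series; have [P_gt0 _ _] := parts.
pose g A := K A + #|V :\: A|.
have [Am Am_P g_min] := seq_extremum (r := fun A B => g A <= g B)
  (fun A B => leq_total (g A) (g B)) (fun B A C AB BC => leq_trans AB BC) P_gt0.
have [_ k_lt decomp small] := certs Am Am_P; have sAm := parts_sub parts Am_P.
have g_lt : g Am < #|V|.
  by have := cardsID Am V; rewrite (setIidPr sAm) /g; lia.
exists (g Am), (series_haven V P H), (map (fun B => B :|: (V :\: Am)) (Xf Am)).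
split=> //.
- by apply: (haven_series parts series _ g_min g_lt) => A A_P; case: (certs A A_P).
- apply: dpath_decomp_extend (dpath_decomp_size_gt0 _ decomp) decomp => //.
  exact: leq_ltn_trans k_lt.
- move=> B' /mapP[B B_X ->]; have := cardsU B (V :\: Am); have := small B B_X.
  rewrite /g; lia.
Qed.

Lemma choose_certificates E P :
  (forall A, A \in P -> exists k h X, width_certificate A (induced E A) k h X) ->
  exists K H Xf,
    forall A, A \in P -> width_certificate A (induced E A) (K A) (H A) (Xf A).
Proof.
move=> certs.
have /choice[c c_cert] :
    forall A, exists c : nat * ({set T} -> {set T}) * seq {set T},
      A \in P -> width_certificate A (induced E A) c.1.1 c.1.2 c.2.
  move=> A; have [A_P | _] := boolP (A \in P); last by exists (0, id, [::]).
  by have [k [h [X cert]]] := certs A A_P; exists (k, h, X).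
by exists (fun A => (c A).1.1), (fun A => (c A).1.2), (fun A => (c A).2).
Qed.

Lemma ext_dcograph_certificate V E :
  ext_dcograph V E -> exists k h X, width_certificate V E k h X.
Proof.
elim=> [v | {}V {}E P parts sE _ IH series | {}V {}E P parts sE _ IH forward].
- by exists 0, (fun _ => [set v]), [:: [set v]]; apply: certificate_single.
- have [K [H [Xf certs]]] := choose_certificates IH.
  exact: certificate_series parts sE certs series.
- have [K [H [Xf certs]]] := choose_certificates IH.
  exact: certificate_dunion parts sE certs forward.
Qed.

End Certificates.

Section WidthBounds.
Variables (T : finType) (V : {set T}) (E : {set T * T}).

Lemma dpw_le X : is_dpath_decomp V E X -> dpw V E <= dpath_width X.
Proof. by move=> decomp; apply: min_nat_le; exists X. Qed.

Lemma dpw_attained X : is_dpath_decomp V E X ->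
  exists Xm, is_dpath_decomp V E Xm /\ dpath_width Xm = dpw V E.
Proof.
move=> decomp; apply: (min_natE (P := fun n =>
  exists Xm, is_dpath_decomp V E Xm /\ dpath_width Xm = n)).
by exists X.
Qed.

Lemma dtw_attained (I : finType) (ET : rel I) Xt W :
  is_dtree_decomp V E ET Xt W ->
  exists (I' : finType) (ET' : rel I') Xt' W',
    is_dtree_decomp V E ET' Xt' W' /\ dtree_width ET' Xt' W' = dtw V E.
Proof.
move=> decomp; apply: (min_natE (P := fun n =>
  exists (I' : finType) (ET' : rel I') Xt' W',
    is_dtree_decomp V E ET' Xt' W' /\ dtree_width ET' Xt' W' = n)).
by exists I, ET, Xt, W.
Qed.

Lemma dtw_le_dpw X : 0 < #|V| -> is_dpath_decomp V E X -> dtw V E <= dpw V E.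
Proof.
move=> V_gt0 /dpw_attained[Xm [decomp_m <-]].
have [I [ET [Xt [W [tree width_le]]]]] := dtree_decomp_of_dpath_decomp V_gt0 decomp_m.
by apply: leq_trans width_le; apply: min_nat_le; exists I, ET, Xt, W.
Qed.

Lemma haven_le_dtw k h (I : finType) (ET : rel I) Xt W :
  haven V E k h -> is_dtree_decomp V E ET Xt W -> k <= dtw V E.
Proof.
move=> haven_h /dtw_attained[I' [ET' [Xt' [W' [tree <-]]]]].
by have := haven_order_lt_bag haven_h tree; rewrite /dtree_width; lia.
Qed.

End WidthBounds.

Theorem theorem5p6 (T : finType) (V : {set T}) (E : {set T * T}) :
  ext_dcograph V E -> dpw V E = dtw V E.
Proof.
move=> /ext_dcograph_certificate[k [h [X [haven_h k_lt decomp small]]]].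
have V_gt0 : 0 < #|V| := leq_ltn_trans (leq0n k) k_lt.
have width_X : dpath_width X <= k.
  rewrite /dpath_width leq_subLR add1n.
  by apply/bigmax_leqP_seq => B B_X _; apply: small.
have [I [ET [Xt [W [tree _]]]]] := dtree_decomp_of_dpath_decomp V_gt0 decomp.
have := dpw_le decomp; have := dtw_le_dpw V_gt0 decomp.
have := haven_le_dtw haven_h tree; lia.
Qed.
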